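(* Let $k,\ell\in\mathbb{N}$ with $\ell$ even. Let $L\subseteq[-1,0]\times[0,k]$ and $R\subseteq[\ell,\ell+1]\times[0,k]$ be polyominos, and define $P=L\cup R\cup([0,\ell]\times[0,k])$. Color the cells of the plane in a chessboard fashion, with the two colors named black and white so that $b\ge w$, where $b$ and $w$ are the numbers of black and white cells contained in $P$. If $\ell\ge 2k$, then the number of cells of $P$ left uncovered by a maximum domino packing of $P$ is exactly $b-w$. Moreover, there exists a maximum domino packing of $P$ in which the rectangle $[k+1,\ell-k-1]\times[0,k]$ is completely covered and every domino intersecting this rectangle is horizontal.
   Context: A cell is a unit square $[i,i+1]\times[j,j+1]$ with $i,j\in\mathbb{Z}$. A polyomino is a finite union of cells. A domino is an axis-parallel $1\times2$ or $2\times1$ rectangle with integer corners. A domino packing of $P$ is a set of pairwise interior-disjoint dominos contained in $P$. A maximum packing is one with the largest possible number of dominos. A domino is horizontal if it is $2\times 1$, i.e., of width $2$ and height $1$. *)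

From HB Require Import structures.
From mathcomp Require Import all_boot all_order all_algebra finmap.
Set Implicit Arguments. Unset Strict Implicit. Unset Printing Implicit Defensive.
Import Order.TTheory GRing.Theory Num.Theory.
Local Open Scope ring_scope.
Local Open Scope fset_scope.

(* A cell (x, y) is the unit square [x,x+1] x [y,y+1]. *)
Definition cell := (int * int)%type.

(* Cells of the closed rectangle [a,b] x [c,d] (integer corners):
   cells (x,y) with a <= x < b, c <= y < d. *)
Definition ilen (a b : int) : nat := if a <= b then `|b - a|%N else 0%N.
Definition box (a b c d : int) : {fset cell} :=
  [fset p | p in [seq ((a + i%:Z)%R, (c + j%:Z)%R) | i <- iota 0%N (ilen a b),
                                                 j <- iota 0%N (ilen c d)]].

(* A domino is given by its lower-left cell and an orientation:
   true = horizontal (2x1, width 2), false = vertical (1x2). *)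
Definition domino := (cell * bool)%type.
Definition horizontal (d : domino) : bool := d.2.
Definition dcells (d : domino) : {fset cell} :=
  [fset d.1; if d.2 then ((d.1.1 + 1)%R, d.1.2) else (d.1.1, (d.1.2 + 1)%R)].

Definition packing (P : {fset cell}) (D : {fset domino}) : Prop :=
  (forall d, d \in D -> dcells d `<=` P) /\
  (forall d d', d \in D -> d' \in D -> d != d' -> dcells d `&` dcells d' = fset0).

Definition max_packing (P : {fset cell}) (D : {fset domino}) : Prop :=
  packing P D /\ forall D', packing P D' -> (#|` D'| <= #|` D|)%N.

Definition covered (D : {fset domino}) (c : cell) : bool :=
  has (fun d => c \in dcells d) D.

Definition uncovered (P : {fset cell}) (D : {fset domino}) : {fset cell} :=
  [fset c in P | ~~ covered D c].

Definition color (c : cell) : bool := (2 %| (c.1 + c.2)%R)%Z.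

Definition ncol (P : {fset cell}) (col : bool) : nat :=
  #|` [fset c in P | color c == col]|.

From HB Require Import structures.
From mathcomp Require Import all_boot all_order all_algebra finmap.
From mathcomp Require Import zify.
Set Implicit Arguments. Unset Strict Implicit. Unset Printing Implicit Defensive.
Import Order.TTheory GRing.Theory Num.Theory.
Local Open Scope ring_scope.
Local Open Scope fset_scope.

(* Every domino covers one black and one white cell, so a packing D of P satisfies
   ncol P col = #|D| + (number of uncovered cells of colour col) for both colours.  Hence a
   packing whose uncovered cells all have the same colour c is maximum, and any maximum packing
   then leaves exactly ncol P c - ncol P (~~ c) cells uncovered, with c the majority colour.

   Such a packing is built row by row.  Row n of P is an interval [s n, e n) of columns with
   s n in {-1, 0} and e n in {l, l + 1}; an odd row has one surplus cell, of the colour of its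
   first cell, and its defect is +1 or -1 according to that colour.  Between two consecutive
   returns to zero of the partial defect sums, |partial sum| vertical dominoes cross between
   consecutive rows and absorb the surpluses; an odd row whose surplus is never compensated
   keeps a hole, which has colour c once c is chosen to make the total defect nonnegative.
   All vertical dominoes and holes sit in blocks that drift by at most one column per row, so
   they fit in the first k + 1 columns, and since 2k <= l all cells to the right of column k
   are covered by horizontal dominoes. *)

Definition partner (d : domino) : cell :=
  if d.2 then ((d.1.1 + 1)%R, d.1.2) else (d.1.1, (d.1.2 + 1)%R).

Lemma dcellsE d z : (z \in dcells d) = (z == d.1) || (z == partner d).
Proof. by rewrite in_fset2. Qed.

Lemma color_partner d : color (partner d) = ~~ color d.1.
Proof.
by case: d => [[x y] []]; rewrite /partner /color /=; apply/idP/idP; lia.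
Qed.

Definition dcell_of_color (col : bool) (d : domino) : cell :=
  if color d.1 == col then d.1 else partner d.

Lemma dcell_of_color_in col d : dcell_of_color col d \in dcells d.
Proof. by rewrite dcellsE /dcell_of_color; case: ifP; rewrite eqxx ?orbT. Qed.

Lemma color_dcell_of_color col d : color (dcell_of_color col d) = col.
Proof.
rewrite /dcell_of_color; case: eqP => // /eqP.
by rewrite color_partner; case: col; case: (color d.1).
Qed.

Lemma dcell_of_colorE col d z :
  z \in dcells d -> color z = col -> z = dcell_of_color col d.
Proof.
rewrite dcellsE /dcell_of_color => /orP[] /eqP -> <-; first by rewrite eqxx.
by rewrite color_partner; case: (color d.1).
Qed.

Lemma coveredP D z : reflect (exists2 d, d \in D & z \in dcells d) (covered D z).
Proof. exact: hasP. Qed.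

Definition colset (A : {fset cell}) (col : bool) := [fset z in A | color z == col].

Lemma card_colset (A : {fset cell}) col :
  #|` A| = (#|` colset A col| + #|` colset A (~~ col)|)%N.
Proof.
rewrite -(cardfsID (colset A col) A); congr (_ + _)%N; congr #|` _|.
all: by apply/fsetP => z; rewrite !inE; case: (z \in A); case: col; case: (color z).
Qed.

Lemma ncol_packing P D col : packing P D ->
  ncol P col = (#|` D| + #|` colset (uncovered P D) col|)%N.
Proof.
move=> [subP disj].
have inj : {in D &, injective (dcell_of_color col)}.
  move=> d d' dD d'D e; apply/eqP; apply: contraT => ne.
  have /fsetP/(_ (dcell_of_color col d)) := disj d d' dD d'D ne.
  by rewrite in_fsetI {2}e !dcell_of_color_in in_fset0.
set G := [fset dcell_of_color col d | d in D].
have cardG : #|` G| = #|` D| by rewrite card_in_imfset.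
have split_col : colset P col = G `|` colset (uncovered P D) col.
  apply/fsetP => z; rewrite in_fsetU !inE /=; apply/idP/idP.
  - case/andP=> zP /eqP zc; case: (boolP (covered D z)) => [/coveredP [d dD zd]|cv].
      by apply/orP; left; apply/imfsetP; exists d => //; exact: dcell_of_colorE.
    by apply/orP; right; apply/andP; split; [apply/andP|apply/eqP].
  - case/orP => [/imfsetP [d /= dD ->]|]; last by case/andP=> /andP[-> _] ->.
    by rewrite color_dcell_of_color eqxx andbT (fsubsetP (subP d dD)) ?dcell_of_color_in.
have disjG : G `&` colset (uncovered P D) col = fset0.
  apply/fsetP => z; rewrite in_fsetI in_fset0 !inE; apply/negP.
  case/andP=> /imfsetP [d /= dD ->] /andP[/andP[_ /negP ncv] _]; apply: ncv.
  by apply/coveredP; exists d; rewrite ?dcell_of_color_in.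
by rewrite /ncol -/(colset P col) split_col cardfsU disjG cardfs0 subn0 cardG.
Qed.

Section MonochromeHoles.

Variables (P : {fset cell}) (D0 : {fset domino}) (c : bool).
Hypotheses (packD0 : packing P D0) (holesD0 : forall z, z \in uncovered P D0 -> color z = c).

Lemma ncol_monochrome_holes : ncol P (~~ c) = #|` D0|.
Proof.
rewrite (ncol_packing (~~ c) packD0) -[RHS]addn0; congr (_ + _)%N.
apply/eqP; rewrite cardfs_eq0; apply/eqP/fsetP => z; rewrite in_fset0 !inE.
by apply/negP => /andP[zU]; rewrite holesD0 ?inE //; case: (c).
Qed.

Lemma max_packing_monochrome_holes : max_packing P D0.
Proof.
split=> // D packD.
by rewrite -ncol_monochrome_holes (ncol_packing _ packD) leq_addr.
Qed.

Lemma card_uncovered_max_packing black D :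
  (ncol P (~~ black) <= ncol P black)%N -> max_packing P D ->
  #|` uncovered P D| = (ncol P black - ncol P (~~ black))%N.
Proof.
move=> le_col [packD maxD].
have eqD : #|` D| = #|` D0|.
  by apply/eqP; rewrite eqn_leq maxD // andbT; apply: max_packing_monochrome_holes.2.
move: ncol_monochrome_holes (ncol_packing c packD) (ncol_packing (~~ c) packD).
move: (card_colset (uncovered P D) c); rewrite eqD.
by case: black le_col; case: (c) => /=; lia.
Qed.

End MonochromeHoles.

Lemma in_box a b c d (p : cell) :
  (p \in box a b c d) = [&& a <= p.1, p.1 < b, c <= p.2 & p.2 < d].
Proof.
rewrite /box; apply/imfsetP/idP => /=.
- case=> q /allpairsP [[i j] /= [hi hj ->]] ->.
  by move: hi hj; rewrite /ilen; do 2 case: ifP; rewrite /= ?mem_iota ?in_nil //; lia.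
- case: p => x y /= h; exists (x, y) => //; apply/allpairsP.
  exists (`|x - a|%N, `|y - c|%N); rewrite /= !mem_iota /ilen.
  have -> : a <= b by lia.
  have -> : c <= d by lia.
  split; [lia|lia|congr pair; lia].
Qed.

Definition row_start (L : {fset cell}) (n : nat) : int :=
  if (-1, n%:Z) \in L then -1 else 0.

Definition row_end (l : nat) (R : {fset cell}) (n : nat) : int :=
  l%:Z + (if (l%:Z, n%:Z) \in R then 1 else 0).

Definition in_rows (k : nat) (s e : nat -> int) (z : cell) : bool :=
  [&& 0 <= z.2, z.2 < k%:Z, s `|z.2|%N <= z.1 & z.1 < e `|z.2|%N].

Lemma in_region k l L R :
  L `<=` box (-1) 0 0 k%:Z -> R `<=` box l%:Z (l%:Z + 1)%R 0 k%:Z ->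
  forall z, (z \in L `|` R `|` box 0 l%:Z 0 k%:Z) = in_rows k (row_start L) (row_end l R) z.
Proof.
move=> /fsubsetP subL /fsubsetP subR [x y].
rewrite /in_rows !in_fsetU in_box /row_start /row_end /=.
apply/idP/idP.
- have yE : 0 <= y -> (x, y) = (x, `|y|%N%:Z) by move=> ?; congr pair; lia.
  case/orP => [/orP[zL|zR]|]; last by do 2 case: ifP; lia.
  + have /[!in_box]/= zb := subL _ zL; move: zL; rewrite yE; last lia.
    have -> : x = -1 by lia.
    by move=> ->; case: ifP; lia.
  + have /[!in_box]/= zb := subR _ zR; move: zR; rewrite yE; last lia.
    have -> : x = l%:Z by lia.
    by move=> ->; case: ifP; lia.
- case/and4P=> y0 yk; have -> : `|y|%N%:Z = y by lia.
  have [->|x1] := eqVneq x (-1).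
    by case: ((-1, y) \in L); rewrite /= ?orbT //; repeat case: ifP; lia.
  have [->|xl] := eqVneq x l%:Z.
    by case: ((l%:Z, y) \in R); rewrite /= ?orbT //; repeat case: ifP; lia.
  move=> sx xe; apply/orP; right; apply/and4P; split=> //; move: x1 xl sx xe; repeat case: ifP; lia.
Qed.

Local Close Scope fset_scope.

(* In row n the columns
   [pstart n, pstart n + pdown n + pup n) hold the cells of vertical dominoes, alternately the
   upper cell of a domino coming from row n - 1 (pdown n of them) and the lower cell of a
   domino going to row n + 1 (pup n of them), the first one coming from below iff pphase n;
   they are followed by one uncovered cell iff phole n, and the rest of the row is covered by
   horizontal dominoes. *)
Record profile := Profile {
  pstart : nat -> int;
  pphase : nat -> bool;
  pdown : nat -> nat;
  pup : nat -> nat;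
  phole : nat -> bool }.

Definition vwidth (p : profile) n : int := (pdown p n + pup p n)%N%:Z.
Definition bwidth (p : profile) n : int := (pdown p n + pup p n + phole p n)%N%:Z.

Definition in_vblock p n x := (0 <= x - pstart p n) && (x - pstart p n < vwidth p n).
Definition down_col p n x := in_vblock p n x && ((2 %| x - pstart p n)%Z == pphase p n).
Definition up_col p n x := in_vblock p n x && ((2 %| x - pstart p n)%Z != pphase p n).

Definition balanced p n : bool :=
  if pphase p n then (pup p n <= pdown p n <= (pup p n).+1)%N
  else (pdown p n <= pup p n <= (pdown p n).+1)%N.

Lemma down_col_gt0 p n x : balanced p n -> down_col p n x -> (0 < pdown p n)%N.
Proof.
rewrite /balanced /down_col /in_vblock /vwidth.
by case: (pphase p n); rewrite ?eqb_id ?eqbF_neg; lia.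
Qed.

Lemma up_col_gt0 p n x : balanced p n -> up_col p n x -> (0 < pup p n)%N.
Proof.
rewrite /balanced /up_col /in_vblock /vwidth.
by case: (pphase p n); rewrite ?eqb_id ?eqbF_neg ?negbK; lia.
Qed.

Definition row_ok k (s e : nat -> int) c p n : Prop :=
  [/\ 0 <= pstart p n /\ (2 %| pstart p n - s n)%Z,
      pstart p n + bwidth p n <= k%:Z + 1 /\ (2 %| e n - (pstart p n + bwidth p n))%Z,
      balanced p n &
      phole p n -> [/\ pdown p n = 0%N, pup p n = 0%N & color (pstart p n, n%:Z) = c]].

Definition rows_linked p n : Prop :=
  pdown p n.+1 = pup p n /\
  ((0 < pup p n)%N -> pstart p n + (pphase p n)%:Z = pstart p n.+1 + 1 - (pphase p n.+1)%:Z).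

Definition profile_ok_from k s e c p y0 : Prop :=
  [/\ forall n, (y0 <= n)%N -> (n < k)%N -> row_ok k s e c p n,
      forall n, (y0 <= n)%N -> (n.+1 < k)%N -> rows_linked p n,
      (y0 < k)%N -> pdown p y0 = 0%N &
      forall n, (y0 <= n)%N -> n.+1 = k -> pup p n = 0%N].

Definition block_ok k s e c p (y0 y1 : nat) : Prop :=
  [/\ forall n, (y0 <= n <= y1)%N -> row_ok k s e c p n,
      forall n, (y0 <= n < y1)%N -> rows_linked p n,
      pdown p y0 = 0%N & pup p y1 = 0%N].

Lemma up_col_linked k s e c p n : row_ok k s e c p n -> row_ok k s e c p n.+1 ->
  rows_linked p n -> up_col p n =1 down_col p n.+1.
Proof.
move=> [_ _ bal _] [_ _ bal' _] [link link_start] x.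
case: (posnP (pup p n)) => [up0|/link_start].
  apply/idP/idP => [/(up_col_gt0 bal)|/(down_col_gt0 bal')]; rewrite ?link; lia.
move: bal bal'; rewrite /balanced /up_col /down_col /in_vblock /vwidth link.
by case: (pphase p n); case: (pphase p n.+1); rewrite /= ?eqb_id ?eqbF_neg ?negbK; lia.
Qed.

(* The horizontal domino covering (x, n) when columns are paired as o + 2i, o + 2i + 1. *)
Definition hpair (o : int) (n : nat) (x : int) : domino :=
  if (2 %| x - o)%Z then ((x, n%:Z), true) else ((x - 1, n%:Z), true).

Lemma hpair_sound a b o n x : a <= x < b -> (2 %| b - a)%Z -> (2 %| o - a)%Z ->
  (x, n%:Z) \in dcells (hpair o n x) /\
  forall w, w \in dcells (hpair o n x) ->
    exists2 x', w = (x', n%:Z) & a <= x' < b /\ hpair o n x' = hpair o n x.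
Proof.
move=> xab ab oa; rewrite /hpair; case: ifP => xo.
- split; first by rewrite dcellsE eqxx.
  move=> w; rewrite dcellsE /partner /= => /orP[] /eqP ->.
    by exists x => //; rewrite xo; split=> //; lia.
  exists (x + 1) => //; split; first lia.
  have -> : (2 %| x + 1 - o)%Z = false by lia.
  by rewrite addrK.
- split; first by rewrite dcellsE /partner /= subrK eqxx orbT.
  move=> w; rewrite dcellsE /partner /= subrK => /orP[] /eqP ->.
    exists (x - 1) => //; split; first lia.
    by have -> : (2 %| x - 1 - o)%Z by lia.
  by exists x => //; rewrite xo; split=> //; lia.
Qed.

Definition row_owner p n x : option domino :=
  if down_col p n x then Some ((x, n%:Z - 1), false)
  else if up_col p n x then Some ((x, n%:Z), false)
  else if x < pstart p n then Some (hpair (pstart p n) n x)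
  else if x < pstart p n + bwidth p n then None
  else Some (hpair (pstart p n + bwidth p n) n x).

Lemma row_owner_left p n x : x < pstart p n -> row_owner p n x = Some (hpair (pstart p n) n x).
Proof.
move=> xl; have nb : in_vblock p n x = false by rewrite /in_vblock; lia.
by rewrite /row_owner /down_col /up_col nb xl.
Qed.

Lemma row_owner_right p n x : pstart p n + bwidth p n <= x ->
  row_owner p n x = Some (hpair (pstart p n + bwidth p n) n x).
Proof.
move=> xr; have nb : in_vblock p n x = false by move: xr; rewrite /in_vblock /vwidth /bwidth; lia.
have [x1 x2] : (x < pstart p n) = false /\ (x < pstart p n + bwidth p n) = false.
  by move: xr; rewrite /bwidth; split; apply/negbTE; rewrite -leNgt; lia.
by rewrite /row_owner /down_col /up_col nb x1 x2.
Qed.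

Definition owner p (z : cell) : option domino := row_owner p `|z.2|%N z.1.

Section Owner.

Variables (k : nat) (s e : nat -> int) (c : bool) (p : profile).
Hypotheses (s_bounds : forall n, -1 <= s n <= 0)
  (e_bound : forall n, (n < k)%N -> k%:Z + 1 <= e n)
  (pok : profile_ok_from k s e c p 0).

Lemma row_okP n : (n < k)%N -> row_ok k s e c p n.
Proof. by case: pok => ok _ _ _ nk; apply: ok. Qed.

Lemma rows_linkedP n : (n.+1 < k)%N -> rows_linked p n.
Proof. by case: pok => _ linked _ _ nk; apply: linked. Qed.

Lemma owner_row x (n : nat) : owner p (x, n%:Z) = row_owner p n x.
Proof. by []. Qed.

Lemma block_in_rows n x : (n < k)%N -> 0 <= x - pstart p n < bwidth p n ->
  in_rows k s e (x, n%:Z).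
Proof.
move=> nk xb; have [[st0 _] [fit _] _ _] := row_okP nk.
by have := s_bounds n; have := e_bound nk; rewrite /in_rows /=; lia.
Qed.

Lemma down_col_below n x : (n < k)%N -> down_col p n x ->
  exists2 m, n = m.+1 & up_col p m x.
Proof.
case: n => [|m] nk downx.
  have [_ _ bal _] := row_okP nk; move: (down_col_gt0 bal downx).
  by case: pok => _ _ -> .
exists m => //.
by rewrite (up_col_linked (row_okP (ltnW nk)) (row_okP nk) (rows_linkedP nk)).
Qed.

Lemma up_col_above n x : (n < k)%N -> up_col p n x -> (n.+1 < k)%N /\ down_col p n.+1 x.
Proof.
move=> nk upx; have n1k : (n.+1 < k)%N.
  rewrite ltn_neqAle nk andbT; apply/eqP => n1.
  have [_ _ bal _] := row_okP nk; move: (up_col_gt0 bal upx).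
  by case: pok => _ _ _ ->.
by rewrite -(up_col_linked (row_okP nk) (row_okP n1k) (rows_linkedP n1k)).
Qed.

Lemma down_col_owner n x : down_col p n x -> row_owner p n x = Some ((x, n%:Z - 1), false).
Proof. by rewrite /row_owner => ->. Qed.

Lemma up_col_owner n x : up_col p n x -> row_owner p n x = Some ((x, n%:Z), false).
Proof.
rewrite /row_owner /up_col /down_col => /andP[-> /negbTE ->].
by rewrite andbF.
Qed.

Lemma vertical_sound n x : (n < k)%N -> down_col p n x ->
  forall w, w \in dcells ((x, n%:Z - 1), false) ->
    in_rows k s e w /\ owner p w = Some ((x, n%:Z - 1), false).
Proof.
move=> nk downx w; rewrite dcellsE /partner /= subrK.
have [m nE upx] := down_col_below nk downx.
have inb q y : in_vblock p q y -> 0 <= y - pstart p q < bwidth p q.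
  by rewrite /in_vblock /vwidth /bwidth; lia.
have mE : n%:Z - 1 = m%:Z by rewrite nE; lia.
have mk : (m < k)%N by move: nk; rewrite nE; apply: ltnW.
case/orP => /eqP ->; rewrite mE owner_row.
- split; last by rewrite up_col_owner.
  by apply: block_in_rows mk (inb _ _ _); case/andP: upx.
- split; last by rewrite down_col_owner // mE.
  by apply: block_in_rows nk (inb _ _ _); case/andP: downx.
Qed.

Lemma owner_sound z d : in_rows k s e z -> owner p z = Some d ->
  z \in dcells d /\ forall w, w \in dcells d -> in_rows k s e w /\ owner p w = Some d.
Proof.
case: z => x y /and4P[/= y0 yk sx xe].
have yE : y = `|y|%N%:Z by lia.
rewrite yE; set n := `|y|%N; rewrite owner_row.
have nk : (n < k)%N by lia.
have [[st0 st_s] [fit e_fit] _ _] := row_okP nk.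
have sn := s_bounds n; have en := e_bound nk.
have bw0 : 0 <= bwidth p n by rewrite /bwidth; lia.
rewrite /row_owner; case: ifP => [downx [<-]|_].
  by rewrite dcellsE /partner /= subrK eqxx orbT; split=> //; apply: vertical_sound.
case: ifP => [upx [<-]|_].
  have [n1k downx] := up_col_above nk upx.
  rewrite dcellsE eqxx; split=> //.
  have -> : n%:Z = n.+1%:Z - 1 by lia.
  exact: vertical_sound.
case: ifP => [xst [<-]|/negbT xst].
  have xab : s n <= x < pstart p n by rewrite sx xst.
  have [xin hsound] := hpair_sound n xab st_s st_s.
  split=> // w /hsound [x' -> [x'b <-]].
  by rewrite owner_row row_owner_left; [split=> //; rewrite /in_rows /=; lia | lia].
case: ifP => [//|/negbT xbl [<-]].
have xab : pstart p n + bwidth p n <= x < e n by rewrite leNgt xbl xe.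
have o0 : (2 %| pstart p n + bwidth p n - (pstart p n + bwidth p n))%Z by rewrite subrr.
have [xin hsound] := hpair_sound n xab e_fit o0.
split=> // w /hsound [x' -> [x'b <-]].
by rewrite owner_row row_owner_right; [split=> //; rewrite /in_rows /=; lia | lia].
Qed.

Lemma owner_none_color z : in_rows k s e z -> owner p z = None -> color z = c.
Proof.
case: z => x y /and4P[/= y0 yk _ _].
have yE : y = `|y|%N%:Z by lia.
rewrite yE; set n := `|y|%N; rewrite owner_row.
have nk : (n < k)%N by lia.
have [_ _ _ hole] := row_okP nk.
rewrite /row_owner; case: ifP => // ndown; case: ifP => // nup.
have /negbT nvb : in_vblock p n x = false.
  by move: ndown nup; rewrite /down_col /up_col; case: (in_vblock p n x); case: (_ == _).
case: ifP => // /negbT xst; case: ifP => // xbl _.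
move: nvb xst xbl; rewrite /in_vblock /bwidth /vwidth.
case: (phole p n) hole => [/(_ isT) [-> -> <-] *|_ /=]; last lia.
by have -> : x = pstart p n by lia.
Qed.

Lemma row_owner_center n x : (n < k)%N -> k%:Z + 1 <= x ->
  exists b, row_owner p n x = Some (b, true).
Proof.
move=> nk xk; have [_ [fit _] _ _] := row_okP nk.
by rewrite row_owner_right; [rewrite /hpair; case: ifP; eexists | lia].
Qed.

Local Open Scope fset_scope.

Lemma profile_packing (P : {fset cell}) : (forall z, (z \in P) = in_rows k s e z) ->
  exists D, [/\ packing P D, forall z, z \in uncovered P D -> color z = c,
     forall z, z \in P -> (k%:Z + 1)%R <= z.1 -> covered D z &
     forall d, d \in D -> (exists2 z, z \in dcells d & (k%:Z + 1)%R <= z.1) -> horizontal d].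
Proof.
move=> memP.
pose D := [fset odflt ((0, 0), true) (owner p z) | z in P & owner p z != None].
have memD d : reflect (exists2 z, z \in P & owner p z = Some d) (d \in D).
  apply: (iffP idP) => [/imfsetP [z /= /andP[zP]]|[z zP ez]].
    by case E: (owner p z) => [d1|] //= _ ->; exists z.
  by apply/imfsetP; exists z; rewrite /= ?inE ?zP ?ez.
have soundD d : d \in D -> forall w, w \in dcells d -> w \in P /\ owner p w = Some d.
  case/memD => z; rewrite memP => zP ez w wd.
  by have [_ /(_ w wd) [wP ->]] := owner_sound zP ez; rewrite memP.
have covD z : z \in P -> owner p z != None -> covered D z.
  move=> zP; case ez : (owner p z) => [d|] // _.
  apply/coveredP; exists d; first by apply/memD; exists z.
  by rewrite memP in zP; case: (owner_sound zP ez).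
have center z : z \in P -> (k%:Z + 1)%R <= z.1 -> exists b, owner p z = Some (b, true).
  case: z => x y; rewrite memP => /and4P[/= y0 yk _ _] /= xk.
  by rewrite /owner /=; apply: row_owner_center; lia.
exists D; split.
- split=> [d /soundD dP | d d' /soundD dP /soundD d'P ne].
    by apply/fsubsetP => w /dP [].
  apply/fsetP => w; rewrite in_fsetI in_fset0; apply/negP => /andP[/dP[_ ew] /d'P[_]].
  rewrite ew => -[eq_dd'].
  by rewrite eq_dd' eqxx in ne.
- move=> z; rewrite inE => /andP[zP ncv]; apply: owner_none_color; first by rewrite -memP.
  by case ez : (owner p z) => [d|] //; move/negP: ncv; case; apply: covD; rewrite ?ez.
- by move=> z zP /(center z zP) [b eb]; apply: covD; rewrite ?eb.
- move=> d dD [w wd xk]; have [wP ew] := soundD d dD w wd.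
  by have [b eb] := center w wP xk; move: ew; rewrite eb => [[<-]].
Qed.

End Owner.

Definition defect (s e : nat -> int) (c : bool) (n : nat) : int :=
  if (2 %| e n - s n)%Z then 0 else if color (s n, n%:Z) == c then 1 else -1.

Lemma defectP s e c n :
  [\/ defect s e c n = 0 /\ (2 %| e n - s n)%Z,
      [/\ defect s e c n = 1, ~~ (2 %| e n - s n)%Z & color (s n, n%:Z) = c] |
      [/\ defect s e c n = -1, ~~ (2 %| e n - s n)%Z & color (s n, n%:Z) = ~~ c]].
Proof.
rewrite /defect; case: ifP => [even|/negbT odd]; first by constructor 1.
by case: eqP => col; [constructor 2 | constructor 3]; split=> //; case: c col; case: color.
Qed.

Lemma defect_opp s e c n : defect s e (~~ c) n = - defect s e c n.
Proof. by rewrite /defect; case: ifP => // _; case: color; case: c. Qed.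

Lemma defect_color_eq s e c a b : defect s e c a = defect s e c b -> defect s e c a != 0 ->
  (2 %| (s a + a%:Z) - (s b + b%:Z))%Z.
Proof.
case: (defectP s e c a) => [[->]|[-> _ ca]|[-> _ ca]] //;
  case: (defectP s e c b) => [[->]|[-> _ cb]|[-> _ cb]] //= _ _;
  by move: ca cb; rewrite /color /=; case: c => /=; lia.
Qed.

Lemma defect_color_opp s e c a b : defect s e c a = - defect s e c b -> defect s e c a != 0 ->
  ~~ (2 %| (s a + a%:Z) - (s b + b%:Z))%Z.
Proof.
case: (defectP s e c a) => [[->]|[-> _ ca]|[-> _ ca]] //;
  case: (defectP s e c b) => [[->]|[-> _ cb]|[-> _ cb]] //= _ _;
  by move: ca cb; rewrite /color /=; case: c => /=; lia.
Qed.

Definition defect_sum s e c (a b : nat) : int := \sum_(a <= i < b) defect s e c i.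

Lemma defect_sumS s e c a b : (a <= b)%N ->
  defect_sum s e c a b.+1 = defect_sum s e c a b + defect s e c b.
Proof. by move=> ab; rewrite /defect_sum big_nat_recr. Qed.

Lemma defect_sum1 s e c a : defect_sum s e c a a.+1 = defect s e c a.
Proof. by rewrite /defect_sum big_nat1. Qed.

Lemma defect_sum_cat s e c a b d : (a <= b <= d)%N ->
  defect_sum s e c a d = defect_sum s e c a b + defect_sum s e c b d.
Proof. by case/andP=> ab bd; rewrite /defect_sum -big_cat_nat. Qed.

Lemma defect_sum_opp s e c a b : defect_sum s e (~~ c) a b = - defect_sum s e c a b.
Proof. by rewrite /defect_sum -sumrN; apply: eq_bigr => i _; apply: defect_opp. Qed.

(* Defects lie in {-1, 0, 1}, so partial sums that never vanish keep the sign of the first one. *)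
Lemma defect_sum_sign s e c y0 N :
  (forall n, (y0 <= n < N)%N -> defect_sum s e c y0 n.+1 != 0) ->
  forall n, (y0 <= n < N)%N -> 0 < defect s e c y0 * defect_sum s e c y0 n.+1.
Proof.
move=> nz; elim=> [|n IH] /andP[yn nN]; have := nz _ (introT andP (conj yn nN)).
  move: yn; rewrite leqn0 => /eqP ->; rewrite defect_sum1.
  by case: (defectP s e c 0) => [[->]|[-> _ _]|[-> _ _]]; lia.
have [<-|ny] := eqVneq y0 n.+1.
  by rewrite defect_sum1; case: (defectP s e c y0) => [[->]|[-> _ _]|[-> _ _]]; lia.
have yn' : (y0 <= n < N)%N by lia.
have := IH yn'; rewrite (@defect_sumS _ _ _ y0 n.+1); last lia.
by case: (defectP s e c n.+1) => [[->]|[-> _ _]|[-> _ _]];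
  case: (defectP s e c y0) => [[->]|[-> _ _]|[-> _ _]]; lia.
Qed.

(* q is the first column of a domino going up from the previous row; the block of row n
   starts there with a domino from below if this leaves an even number of cells to its left,
   and one column earlier otherwise. *)
Definition chain_next (s : nat -> int) (n : nat) (af : int * bool) : int * bool :=
  let q := af.1 + (af.2 : nat)%:Z in
  let f := (2 %| q - s n)%Z in (q - (~~ f : nat)%:Z, f).

Fixpoint chain (s : nat -> int) (y0 n : nat) : int * bool :=
  if n is m.+1 then
    (if (n <= y0)%N then (s y0, false) else chain_next s n (chain s y0 m))
  else (s y0, false).

Lemma chain_base s y0 : chain s y0 y0 = (s y0, false).
Proof. by case: y0 => //= n; rewrite leqnn. Qed.

Lemma chain_step s y0 n : (y0 <= n)%N -> chain s y0 n.+1 = chain_next s n.+1 (chain s y0 n).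
Proof. by move=> yn /=; rewrite leqNgt ltnS yn. Qed.

Arguments chain : simpl never.

Section Chain.

Variables (s : nat -> int) (y0 : nat).
Let start n := (chain s y0 n).1.
Let phase n : int := ((chain s y0 n).2 : nat)%:Z.

Lemma chain_link n : (y0 <= n)%N -> start n + phase n = start n.+1 + 1 - phase n.+1.
Proof.
by move=> yn; rewrite /start /phase chain_step // /chain_next /=; case: (2 %| _)%Z => /=; lia.
Qed.

Lemma chain_parity n : (y0 <= n)%N -> (2 %| start n - s n)%Z.
Proof.
case: n => [|n] yn.
  have y00 : y0 = 0%N by lia.
  by rewrite /start y00 chain_base subrr.
have [<-|ny] := eqVneq y0 n.+1; first by rewrite /start chain_base subrr.
by rewrite /start chain_step /chain_next /=; [case E: (2 %| _ - s n.+1)%Z => /=; lia | lia].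
Qed.

(* All vertical dominoes of the chain have their lower cell of the colour of (s y0, y0). *)
Lemma chain_up_parity n : (y0 <= n)%N ->
  (2 %| (start n + phase n + n%:Z) - (s y0 + y0%:Z))%Z.
Proof.
elim: n => [|n IH] yn.
  have y00 : y0 = 0%N by lia.
  by rewrite /start /phase y00 chain_base /=; lia.
have [<-|ny] := eqVneq y0 n.+1; first by rewrite /start /phase chain_base /=; lia.
have yn' : (y0 <= n)%N by lia.
have := chain_link yn'; have := IH yn'.
by rewrite /phase; case: (chain s y0 n).2; case: (chain s y0 n.+1).2 => /=; lia.
Qed.

Lemma chain_phase_color n : (y0 <= n)%N ->
  (chain s y0 n.+1).2 = ~~ (2 %| (s n.+1 + n.+1%:Z) - (s y0 + y0%:Z))%Z.
Proof.
move=> yn; have := chain_up_parity yn; rewrite /start /phase => up_par.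
by rewrite chain_step // /chain_next /=; apply/idP/idP; lia.
Qed.

End Chain.

Section Episode.

Variables (k : nat) (s e : nat -> int) (c : bool) (y0 y1 : nat).
Hypotheses (y01 : (y0 < y1)%N) (y1k : (y1 < k)%N)
  (sum_y1 : defect_sum s e c y0 y1.+1 = 0)
  (sum_nz : forall n, (y0 <= n < y1)%N -> defect_sum s e c y0 n.+1 != 0).

Let F n := defect_sum s e c y0 n.+1.
Let sg := defect s e c y0.

Lemma episode_sign n : (y0 <= n < y1)%N -> 0 < sg * F n.
Proof. exact: defect_sum_sign. Qed.

Lemma episode_sg : sg = 1 \/ sg = -1.
Proof.
have := @episode_sign y0; rewrite leqnn y01 /F defect_sum1 => /(_ isT).
by rewrite /sg; case: (defectP s e c y0) => [[->]|[-> _ _]|[-> _ _]]; [lia|left|right].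
Qed.

Let start n := (chain s y0 n).1.
Let phase n := (chain s y0 n).2.
(* |F n| vertical dominoes cross between rows n and n + 1. *)
Let down n := if (n <= y0)%N then 0%N else `|F n.-1|%N.
Let up n := `|F n|%N.
Let raw := Profile start phase down up (fun=> false).

Lemma episode_balanced n : (y0 <= n <= y1)%N -> balanced raw n.
Proof.
case/andP=> yn ny1; rewrite /balanced /= /down.
have [->|ny0] := eqVneq n y0.
  by rewrite /phase /down /up chain_base leqnn /F defect_sum1 -/sg; case: episode_sg => ->.
case: n yn ny1 ny0 => [|m] yn ny1 ny0; first lia.
have ym : (y0 <= m)%N by lia.
have pos : 0 < sg * F m by apply: episode_sign; lia.
rewrite /F in pos.
have same : defect s e c m.+1 = sg -> (2 %| (s m.+1 + m.+1%:Z) - (s y0 + y0%:Z))%Z.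
  by move=> dsg; apply: (@defect_color_eq s e c) => //; rewrite dsg; case: episode_sg => ->.
have opp : defect s e c m.+1 = - sg -> ~~ (2 %| (s m.+1 + m.+1%:Z) - (s y0 + y0%:Z))%Z.
  by move=> dsg; apply: (@defect_color_opp s e c) => //; rewrite dsg; case: episode_sg => ->.
have -> : (m.+1 <= y0)%N = false by apply/negbTE; rewrite -ltnNge.
rewrite /phase /up (chain_phase_color s ym) /F (@defect_sumS _ _ _ y0 m.+1) /=; last lia.
have [d0|dsg|dopp] : [\/ defect s e c m.+1 = 0, defect s e c m.+1 = sg | defect s e c m.+1 = - sg].
- case: (defectP s e c m.+1) => [[->]|[-> _ _]|[-> _ _]]; case: episode_sg => ->;
  by [constructor 1 | constructor 2 | constructor 3].
- by rewrite d0 addr0; case: ifP; rewrite leqnn leqnSn.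
- rewrite dsg ifN; last by rewrite negbK; apply: same.
  by move: pos; case: episode_sg => ->; lia.
- rewrite dopp ifT; last exact: opp.
  by move: pos; case: episode_sg => ->; lia.
Qed.

Lemma episode_down_succ n : (y0 <= n)%N -> down n.+1 = up n.
Proof. by move=> yn; rewrite /down ifF //; apply/negbTE; rewrite -ltnNge ltnS. Qed.

Let bend n : int := start n + (down n + up n)%N%:Z.

(* The vertical blocks drift by at most one column per row. *)
Lemma episode_span n : (y0 <= n <= y1)%N -> exists lo hi : int,
  (forall i, (y0 <= i <= n)%N -> lo <= start i /\ bend i <= hi) /\
  hi - lo <= (up n + (n - y0))%N%:Z.
Proof.
have base : exists lo hi : int,
    (forall i, (y0 <= i <= y0)%N -> lo <= start i /\ bend i <= hi) /\
    hi - lo <= (up y0 + (y0 - y0))%N%:Z.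
  exists (start y0), (bend y0); split.
    move=> i yi; have -> : i = y0 by lia.
    by split; apply: lexx.
  rewrite /bend /down /up leqnn subnn addn0 /F defect_sum1 -/sg.
  by case: episode_sg => ->; lia.
elim: n => [|n IH] /andP[yn ny1].
  by move: base; have -> : y0 = 0%N by lia.
have [ey|ny] := eqVneq y0 n.+1; first by move: base; rewrite ey.
have yn' : (y0 <= n)%N by lia.
have [lo [hi [inside width]]] := IH (introT andP (conj yn' (ltnW ny1))).
have [lo_n hi_n] := inside n (introT andP (conj yn' (leqnn n))).
exists (Order.min lo (start n.+1)), (Order.max hi (bend n.+1)); split.
  move=> i /andP[yi]; rewrite leq_eqVlt ltnS => /orP[/eqP ->|ii]; first lia.
  by have := inside i (introT andP (conj yi ii)); lia.
have bal_n : balanced raw n by apply: episode_balanced; lia.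
have bal_n1 : balanced raw n.+1 by apply: episode_balanced; lia.
move: width lo_n hi_n (chain_link s yn') bal_n bal_n1.
rewrite /bend /balanced /= (episode_down_succ yn') /start /phase.
by case: (chain s y0 n).2; case: (chain s y0 n.+1).2; lia.
Qed.

Lemma episode_end_parity n : (y0 <= n <= y1)%N ->
  (2 %| e n - (start n + (down n + up n)%N%:Z))%Z.
Proof.
case/andP=> yn ny1; have [->|ny0] := eqVneq n y0.
  have := episode_sg; rewrite /sg /start /down /up chain_base leqnn /F defect_sum1 /=.
  by case: (defectP s e c y0) => [[-> _]|[-> odd _]|[-> odd _]]; lia.
case: n yn ny1 ny0 => [|m] yn ny1 ny0; first lia.
have ym : (y0 <= m)%N by lia.
move: (chain_parity s yn); rewrite /start (episode_down_succ ym) /up /F.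
rewrite (@defect_sumS _ _ _ y0 m.+1) /=; last lia.
by case: (defectP s e c m.+1) => [[-> ev]|[-> odd _]|[-> odd _]]; lia.
Qed.

Lemma episode_profile : exists p, block_ok k s e c p y0 y1.
Proof.
have [lo [hi [inside width]]] := episode_span (introT andP (conj (ltnW y01) (leqnn y1))).
have up_y1 : up y1 = 0%N by rewrite /up /F sum_y1.
rewrite up_y1 in width.
(* Shifting by an even amount preserves all parities and moves the blocks into [0, k + 1). *)
pose z := (lo %/ 2)%Z.
have lo_z : 0 <= lo - 2 * z <= 1 by rewrite /z; lia.
exists (Profile (fun n => start n - 2 * z) phase down up (fun=> false)); split=> //=.
- move=> n /[dup] nb /andP[yn ny1]; have [lo_n hi_n] := inside n nb.
  have par := chain_parity s yn; have epar := episode_end_parity nb.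
  rewrite /bend in hi_n; rewrite /start in lo_n hi_n epar.
  by split=> //; [split|split|exact: episode_balanced nb]; rewrite /bwidth /start /= ?addn0; lia.
- move=> n /andP[yn ny1]; split; first exact: episode_down_succ yn.
  by move=> _; have := chain_link s yn; rewrite /= /start /phase; lia.
- by rewrite /down leqnn.
Qed.

End Episode.

Definition splice (y1 : nat) (p1 p2 : profile) : profile :=
  let q n := if (n <= y1)%N then p1 else p2 in
  Profile (fun n => pstart (q n) n) (fun n => pphase (q n) n) (fun n => pdown (q n) n)
          (fun n => pup (q n) n) (fun n => phole (q n) n).

Lemma row_ok_splice k s e c y1 p1 p2 n :
  row_ok k s e c (splice y1 p1 p2) n <-> row_ok k s e c (if (n <= y1)%N then p1 else p2) n.
Proof. by rewrite /splice /row_ok /balanced /bwidth /=; case: (n <= y1)%N. Qed.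

Lemma profile_ok_splice k s e c y0 y1 p1 p2 : (y0 <= y1)%N -> (y1 < k)%N ->
  block_ok k s e c p1 y0 y1 -> profile_ok_from k s e c p2 y1.+1 ->
  profile_ok_from k s e c (splice y1 p1 p2) y0.
Proof.
move=> y01 y1k [ok1 link1 down1 up1] [ok2 link2 down2 up2]; split.
- move=> n yn nk; apply/row_ok_splice; case: leqP => ny.
    by apply: ok1; rewrite yn.
  exact: ok2.
- move=> n yn n1k; rewrite /rows_linked /splice /=.
  case: (ltngtP n y1) => [lt|gt|ny1].
  + by apply: link1; rewrite yn.
  + exact: link2.
  + by rewrite ny1 up1 down2 // -ny1.
- by rewrite /splice /= y01.
- move=> n yn nk; rewrite /splice /=; case: leqP => ny; last exact: up2.
  by have -> : n = y1 by lia.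
Qed.

Definition single_row (s : nat -> int) (hole : bool) : profile :=
  Profile (fun n => (s n %% 2)%Z) (fun=> false) (fun=> 0%N) (fun=> 0%N) (fun=> hole).

Lemma single_row_even k s e c y : defect s e c y = 0 -> block_ok k s e c (single_row s false) y y.
Proof.
case: (defectP s e c y) => [[_ ev]|[-> _ _]|[-> _ _]] // _.
split=> // n /andP[yn ny].
have -> : n = y by lia.
by rewrite /row_ok /bwidth /balanced /=; split=> //; split; lia.
Qed.

Lemma single_row_hole k s e c y : (y < k)%N -> defect s e c y = 1 ->
  block_ok k s e c (single_row s true) y y.
Proof.
move=> yk; case: (defectP s e c y) => [[-> _]|[_ odd col]|[-> _ _]] // _.
split=> // n /andP[yn ny].
have -> : n = y by lia.
rewrite /row_ok /bwidth /balanced /=; split=> //; [split|split|]; try lia.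
by move: col; rewrite /color /= => <-; split=> //; apply/idP/idP; lia.
Qed.

Lemma profile_ok_from_top k s e c p : profile_ok_from k s e c p k.
Proof. by split=> *; lia. Qed.

Lemma first_in_range (P : pred nat) a b :
  (exists n, [/\ (a <= n < b)%N, P n & forall m, (a <= m < n)%N -> ~~ P m]) \/
  (forall n, (a <= n < b)%N -> ~~ P n).
Proof.
have [/hasP [n]|/hasPn none] := boolP (has P (iota a (b - a))); last first.
  by right=> n nab; apply: none; rewrite mem_iota; lia.
rewrite mem_iota => nab Pn; left.
have ex : exists n, [&& (a <= n)%N, (n < b)%N & P n] by exists n; rewrite Pn andbT; lia.
case: (ex_minnP ex) => m /and3P[am mb Pm] minm.
exists m; split=> //; first by rewrite am.
move=> j /andP[aj jm]; apply/negP => Pj.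
by have := minm j; rewrite aj Pj (ltn_trans jm mb) => /(_ isT); lia.
Qed.

(* An even row stands alone; an odd row starts an episode ending at the first return of the
   partial defect sum to zero or, if there is none, keeps a hole, of colour c because the
   remaining defect sum is nonnegative. *)
Lemma profile_from k s e c t y0 : (k - y0 <= t)%N -> (y0 <= k)%N ->
  0 <= defect_sum s e c y0 k -> exists p, profile_ok_from k s e c p y0.
Proof.
elim: t y0 => [|t IH] y0 kt yk sum0.
  have -> : y0 = k by lia.
  by exists (single_row s false); apply: profile_ok_from_top.
have [->|y0k] := eqVneq y0 k; first by exists (single_row s false); apply: profile_ok_from_top.
have {y0k} yk' : (y0 < k)%N by lia.
have sum_split : defect_sum s e c y0 k = defect s e c y0 + defect_sum s e c y0.+1 k.
  by rewrite (@defect_sum_cat _ _ _ y0 y0.+1 k) ?defect_sum1 // leqnSn.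
have [d0|dnz] := eqVneq (defect s e c y0) 0.
  have [p2 ok2] : exists p, profile_ok_from k s e c p y0.+1 by apply: IH => //; lia.
  by exists (splice y0 (single_row s false) p2); apply: profile_ok_splice => //; exact: single_row_even.
case: (first_in_range (fun n => defect_sum s e c y0 n.+1 == 0) y0 k) =>
    [[y1 [/andP[y0y1 y1k] /eqP sum_y1 before]]|never].
  have {}y0y1 : (y0 < y1)%N.
    by rewrite ltn_neqAle y0y1 andbT; apply: contraNneq dnz => ey; rewrite -defect_sum1 {2}ey sum_y1.
  have [p1 ok1] := episode_profile y0y1 y1k sum_y1 before.
  have [p2 ok2] : exists p, profile_ok_from k s e c p y1.+1.
    apply: IH => //; first lia.
    by rewrite -[defect_sum _ _ _ y1.+1 k]add0r -sum_y1 -defect_sum_cat //; lia.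
  by exists (splice y1 p1 p2); apply: profile_ok_splice => //; exact: ltnW.
have pos : 0 < defect s e c y0 * defect_sum s e c y0 k.
  have := defect_sum_sign never (_ : (y0 <= k.-1 < k)%N); rewrite prednK; last lia.
  by apply; lia.
have d1 : defect s e c y0 = 1.
  by move: pos sum0; case: (defectP s e c y0) => [[->]|[-> _ _]|[-> _ _]]; lia.
have [p2 ok2] : exists p, profile_ok_from k s e c p y0.+1 by apply: IH => //; lia.
by exists (splice y0 (single_row s true) p2); apply: profile_ok_splice => //; exact: single_row_hole.
Qed.

Local Open Scope fset_scope.

Theorem lemma6 (k l : nat) (L R : {fset cell}) :
  ~~ odd l ->
  L `<=` box (-1) 0 0 k%:Z ->
  R `<=` box l%:Z (l%:Z + 1)%R 0 k%:Z ->
  (2 * k <= l)%N ->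
  let P := L `|` R `|` box 0 l%:Z 0 k%:Z in
  (forall (black : bool) (D : {fset domino}),
      (ncol P (~~ black) <= ncol P black)%N ->
      max_packing P D ->
      #|` uncovered P D| = (ncol P black - ncol P (~~ black))%N) /\
  (exists D : {fset domino},
      max_packing P D /\
      (forall c, c \in box (k%:Z + 1)%R (l%:Z - k%:Z - 1)%R 0 k%:Z -> covered D c) /\
      (forall d, d \in D ->
         (exists2 c, c \in box (k%:Z + 1)%R (l%:Z - k%:Z - 1)%R 0 k%:Z & c \in dcells d) ->
         horizontal d)).
Proof.
move=> _ subL subR lk P.
set s := row_start L; set e := row_end l R.
have s_bounds n : (-1 <= s n <= 0)%R by rewrite /s /row_start; case: ifP.
have e_bound n : (n < k)%N -> (k%:Z + 1 <= e n)%R by rewrite /e /row_end; case: ifP; lia.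
have [c sum_ge0] : exists c, (0 <= defect_sum s e c 0 k)%R.
  case: (lerP 0 (defect_sum s e true 0 k)) => h; first by exists true.
  by exists false; rewrite (defect_sum_opp s e true); lia.
have [p pok] := profile_from (leq_subr 0 k) (leq0n k) sum_ge0.
have [D [packD holes cov hor]] := profile_packing s_bounds e_bound pok (in_region subL subR).
have central z : z \in box (k%:Z + 1)%R (l%:Z - k%:Z - 1)%R 0 k%:Z ->
    z \in P /\ (k%:Z + 1 <= z.1)%R.
  case: z => x y; rewrite in_box /= => zb; split; last lia.
  by rewrite /P !in_fsetU in_box /=; apply/orP; right; lia.
split; first exact: card_uncovered_max_packing packD holes.
exists D; split; first exact: max_packing_monochrome_holes packD holes.
split=> [z /central [zP zk] | d dD [z /central [_ zk] zd]]; first exact: cov.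
by apply: (hor d dD); exists z.
Qed.
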